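(* Let $E:[0,\infty)\times\mathbb{R}^2\to\mathbb{R}^2$ and $b:[0,\infty)\times\mathbb{R}^2\to\mathbb{R}$ be continuous with $b$ nowhere vanishing, $B=b\,e_3$. Let $\alpha=0.24169426078821$, $\beta=\alpha/4$, $\eta=0.12915286960590$, $\gamma=1/2-\alpha-\beta-\eta$. Fix $\Delta t>0$, $T>0$, $t^n=n\Delta t$, $t^{n+1/2}=t^n+\Delta t/2$, $N_T=\lfloor T/\Delta t\rfloor$. For each $\varepsilon>0$ let $(x^n_\varepsilon,v^n_\varepsilon)_{0\le n\le N_T}$ be generated (dropping the index $\varepsilon$ inside stages) by: given $(x^n,v^n)$, find stages $(x^{(i)},v^{(i)})$, $i=1,\dots,4$, with $$x^{(1)}=x^n+\tfrac{\alpha\Delta t}{\varepsilon}v^{(1)},\ v^{(1)}=v^n+\tfrac{\alpha\Delta t}{\varepsilon}F^{(1)},\ F^{(1)}=\tfrac{v^{(1)}}{\varepsilon}\wedge B(t^n,x^n)+E(t^n,x^n);$$ $$x^{(2)}=x^n-\tfrac{\alpha\Delta t}{\varepsilon}v^{(1)}+\tfrac{\alpha\Delta t}{\varepsilon}v^{(2)},\ v^{(2)}=v^n-\tfrac{\alpha\Delta t}{\varepsilon}F^{(1)}+\tfrac{\alpha\Delta t}{\varepsilon}F^{(2)},\ F^{(2)}=\tfrac{v^{(2)}}{\varepsilon}\wedge B(t^n,x^n)+E(t^n,x^n);$$ $$x^{(3)}=x^n+\tfrac{(1-\alpha)\Delta t}{\varepsilon}v^{(2)}+\tfrac{\alpha\Delta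 t}{\varepsilon}v^{(3)},\ v^{(3)}=v^n+\tfrac{(1-\alpha)\Delta t}{\varepsilon}F^{(2)}+\tfrac{\alpha\Delta t}{\varepsilon}F^{(3)},$$ $$F^{(3)}=\tfrac{v^{(3)}}{\varepsilon}\wedge B(t^{n+1},\bar x^{(2)})+E(t^{n+1},\bar x^{(2)}),\quad \bar x^{(2)}=x^n+\tfrac{\Delta t}{\varepsilon}v^{(2)};$$ $$x^{(4)}=x^n+\tfrac{\Delta t}{\varepsilon}\big(\beta v^{(1)}+\eta v^{(2)}+\gamma v^{(3)}+\alpha v^{(4)}\big),\ v^{(4)}=v^n+\tfrac{\Delta t}{\varepsilon}\big(\beta F^{(1)}+\eta F^{(2)}+\gamma F^{(3)}+\alpha F^{(4)}\big),$$ $$F^{(4)}=\tfrac{v^{(4)}}{\varepsilon}\wedge B(t^{n+1/2},\bar x^{(3)})+E(t^{n+1/2},\bar x^{(3)}),\quad \bar x^{(3)}=x^n+\tfrac{\Delta t}{4\varepsilon}(v^{(2)}+v^{(3)});$$ and finally $x^{n+1}=x^n+\frac{\Delta t}{6\varepsilon}(v^{(2)}+v^{(3)}+4v^{(4)})$, $v^{n+1}=v^n+\frac{\Delta t}{6\varepsilon}(F^{(2)}+F^{(3)}+4F^{(4)})$. Assume that for every $1\le n\le N_T$ the family $(x^n_\varepsilon,\varepsilon v^n_\varepsilon)_{\varepsilon>0}$ is bounded uniformly in $\varepsilon$ and that $(x^0_\varepsilon,\varepsilon v^0_\varepsilon)\to(y^0,0)$ as $\varepsilon\to0$. Then for every $0\le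 n\le N_T$, $x^n_\varepsilon\to y^n$ as $\varepsilon\to0$, where $(y^n)$ starts from $y^0$ and satisfies $$U^{(2)}=U(t^n,y^n),\quad y^{(2)}=y^n+\Delta t\,U^{(2)},\quad U^{(3)}=U(t^{n+1},y^{(2)}),$$ $$y^{(3)}=y^n+\tfrac{\Delta t}{4}(U^{(2)}+U^{(3)}),\quad U^{(4)}=U(t^{n+1/2},y^{(3)}),\quad y^{n+1}=y^n+\tfrac{\Delta t}{6}(U^{(2)}+U^{(3)}+4U^{(4)}).$$
   Context: Vectors of $\mathbb{R}^2$ are identified with vectors $(w_1,w_2,0)$ of $\mathbb{R}^3$, $e_3=(0,0,1)$, and $\wedge$ is the cross product; thus for $w\in\mathbb{R}^2$ and $B=b\,e_3$, $w\wedge B=b\,(w_2,-w_1)\in\mathbb{R}^2$. The guiding-center drift is $U(t,x)=\dfrac{E(t,x)\wedge B(t,x)}{\|B(t,x)\|^2}$. *)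

From Stdlib Require Import Reals Lra Lia ZArith.
Open Scope R_scope.

(* Vectors of R^2, identified with (w1,w2,0) in R^3. *)
Definition vec := (R * R)%type.
Definition vadd (u w : vec) : vec := (fst u + fst w, snd u + snd w).
Definition vsub (u w : vec) : vec := (fst u - fst w, snd u - snd w).
Definition vscal (c : R) (u : vec) : vec := (c * fst u, c * snd u).
Definition vnorm (u : vec) : R := sqrt (fst u * fst u + snd u * snd u).

(* w /\ (b e3) = b (w2, -w1) *)
Definition wedge_e3 (w : vec) (b : R) : vec := (b * snd w, - (b * fst w)).
Definition normB2 (b : R) : R := b * b.

Definition drift (E : R -> vec -> vec) (b : R -> vec -> R) (t : R) (x : vec) : vec :=
  vscal (/ normB2 (b t x)) (wedge_e3 (E t x) (b t x)).

Definition cont_vec (E : R -> vec -> vec) : Prop :=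
  forall t x, 0 <= t -> forall d, 0 < d -> exists h, 0 < h /\
    forall s y, 0 <= s -> Rabs (s - t) < h -> vnorm (vsub y x) < h ->
      vnorm (vsub (E s y) (E t x)) < d.
Definition cont_scal (b : R -> vec -> R) : Prop :=
  forall t x, 0 <= t -> forall d, 0 < d -> exists h, 0 < h /\
    forall s y, 0 <= s -> Rabs (s - t) < h -> vnorm (vsub y x) < h ->
      Rabs (b s y - b t x) < d.

Definition lim_eps0 (f : R -> vec) (l : vec) : Prop :=
  forall d, 0 < d -> exists h, 0 < h /\
    forall eps, 0 < eps -> eps < h -> vnorm (vsub (f eps) l) < d.

Definition bounded_eps (f : R -> vec) : Prop :=
  exists M, forall eps, 0 < eps -> vnorm (f eps) <= M.

Definition alpha : R := IZR 24169426078821%Z / 10 ^ 14.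
Definition beta : R := alpha / 4.
Definition eta : R := IZR 12915286960590%Z / 10 ^ 14.
Definition gamma : R := 1 / 2 - alpha - beta - eta.

Definition NT (T dt : R) : nat := Z.to_nat (Int_part (T / dt)).

Definition scheme_step (E : R -> vec -> vec) (b : R -> vec -> R)
    (dt eps tn : R) (xn vn xn1 vn1 : vec) : Prop :=
  let tn1 := tn + dt in
  let tnh := tn + dt / 2 in
  let c := alpha * dt / eps in
  exists x1 v1 x2 v2 x3 v3 x4 v4 : vec,
    let F1 := vadd (wedge_e3 (vscal (/ eps) v1) (b tn xn)) (E tn xn) in
    let F2 := vadd (wedge_e3 (vscal (/ eps) v2) (b tn xn)) (E tn xn) in
    let xb2 := vadd xn (vscal (dt / eps) v2) in
    let F3 := vadd (wedge_e3 (vscal (/ eps) v3) (b tn1 xb2)) (E tn1 xb2) in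
    let xb3 := vadd xn (vscal (dt / (4 * eps)) (vadd v2 v3)) in
    let F4 := vadd (wedge_e3 (vscal (/ eps) v4) (b tnh xb3)) (E tnh xb3) in
    x1 = vadd xn (vscal c v1) /\
    v1 = vadd vn (vscal c F1) /\
    x2 = vadd (vsub xn (vscal c v1)) (vscal c v2) /\
    v2 = vadd (vsub vn (vscal c F1)) (vscal c F2) /\
    x3 = vadd (vadd xn (vscal ((1 - alpha) * dt / eps) v2)) (vscal c v3) /\
    v3 = vadd (vadd vn (vscal ((1 - alpha) * dt / eps) F2)) (vscal c F3) /\
    x4 = vadd xn (vscal (dt / eps)
           (vadd (vadd (vadd (vscal beta v1) (vscal eta v2)) (vscal gamma v3))
                 (vscal alpha v4))) /\
    v4 = vadd vn (vscal (dt / eps)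
           (vadd (vadd (vadd (vscal beta F1) (vscal eta F2)) (vscal gamma F3))
                 (vscal alpha F4))) /\
    xn1 = vadd xn (vscal (dt / (6 * eps)) (vadd (vadd v2 v3) (vscal 4 v4))) /\
    vn1 = vadd vn (vscal (dt / (6 * eps)) (vadd (vadd F2 F3) (vscal 4 F4))).

Definition limit_step (E : R -> vec -> vec) (b : R -> vec -> R)
    (dt tn : R) (yn : vec) : vec :=
  let U := drift E b in
  let U2 := U tn yn in
  let y2 := vadd yn (vscal dt U2) in
  let U3 := U (tn + dt) y2 in
  let y3 := vadd yn (vscal (dt / 4) (vadd U2 U3)) in
  let U4 := U (tn + dt / 2) y3 in
  vadd yn (vscal (dt / 6) (vadd (vadd U2 U3) (vscal 4 U4))).

Fixpoint limit_seq (E : R -> vec -> vec) (b : R -> vec -> R)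
    (dt : R) (y0 : vec) (n : nat) : vec :=
  match n with
  | O => y0
  | S m => limit_step E b dt (INR m * dt) (limit_seq E b dt y0 m)
  end.

(* Write u = v / eps for the stage velocities and w = eps v.  Multiplied by eps,
   every stage equation becomes the 2x2 linear system
     eps^2 u = q + c (u /\ B + E),
   with determinant eps^4 + c^2 b^2 bounded away from 0.  Hence, when q -> 0, its
   solution tends to the drift E /\ B / |B|^2 and the force u /\ B + E tends to 0.
   By induction on n this gives x^n -> y^n together with eps v^n -> 0: the
   stage velocities converge to the drift at the limit stage points, so the
   position update of the scheme becomes the limit scheme. *)

From Stdlib Require Import Reals Lra Lia IndefiniteDescription.
Open Scope R_scope.

Definition lim_right0 (f : R -> R) (l : R) : Prop :=
  limit1_in f (fun e => 0 < e) l 0.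

Lemma lim_right0_iff f l :
  lim_right0 f l <->
  forall d, 0 < d -> exists h, 0 < h /\
    forall e, 0 < e -> e < h -> Rabs (f e - l) < d.
Proof.
  split; intros H d Hd; destruct (H d Hd) as [h [Hh Hf]];
    exists h; split; auto; simpl; unfold Rdist.
  - intros e He Heh; apply Hf; split; auto; simpl; unfold Rdist.
    rewrite Rminus_0_r, Rabs_right; lra.
  - intros e [He Heh]; simpl in Heh; unfold Rdist in Heh.
    rewrite Rminus_0_r, Rabs_right in Heh by lra; auto.
Qed.

Ltac solve_lim_right0 :=
  unfold lim_right0 in *;
  first
  [ eassumption
  | apply lim_x
  | apply limit_plus; solve_lim_right0
  | apply limit_minus; solve_lim_right0
  | apply limit_mul; solve_lim_right0
  | apply limit_Ropp; solve_lim_right0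
  | apply limit_inv; [solve_lim_right0 | assumption]
  | apply (limit_free (fun k => k)) ].

Lemma Rabs_fst_le_vnorm u : Rabs (fst u) <= vnorm u.
Proof.
  unfold vnorm; rewrite <- sqrt_Rsqr_abs; apply sqrt_le_1_alt.
  pose proof (Rle_0_sqr (snd u)); unfold Rsqr in *; lra.
Qed.

Lemma Rabs_snd_le_vnorm u : Rabs (snd u) <= vnorm u.
Proof.
  unfold vnorm; rewrite <- sqrt_Rsqr_abs; apply sqrt_le_1_alt.
  pose proof (Rle_0_sqr (fst u)); unfold Rsqr in *; lra.
Qed.

Lemma vnorm_le_Rabs_sum u : vnorm u <= Rabs (fst u) + Rabs (snd u).
Proof.
  pose proof (Rabs_pos (fst u)); pose proof (Rabs_pos (snd u)).
  unfold vnorm; rewrite <- (sqrt_Rsqr (Rabs (fst u) + Rabs (snd u))) by lra.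
  apply sqrt_le_1_alt.
  pose proof (Rsqr_abs (fst u)); pose proof (Rsqr_abs (snd u)).
  unfold Rsqr in *; nra.
Qed.

Lemma lim_eps0_iff f l :
  lim_eps0 f l <->
  lim_right0 (fun e => fst (f e)) (fst l) /\ lim_right0 (fun e => snd (f e)) (snd l).
Proof.
  rewrite !lim_right0_iff; split.
  - intros H; split; intros d Hd; destruct (H d Hd) as [h [Hh Hf]];
      exists h; split; auto; intros e He Heh; specialize (Hf e He Heh).
    + pose proof (Rabs_fst_le_vnorm (vsub (f e) l)); simpl in *; lra.
    + pose proof (Rabs_snd_le_vnorm (vsub (f e) l)); simpl in *; lra.
  - intros [H1 H2] d Hd.
    destruct (H1 (d / 2)) as [h1 [Hh1 F1]]; [lra |].
    destruct (H2 (d / 2)) as [h2 [Hh2 F2]]; [lra |].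
    exists (Rmin h1 h2); split; [now apply Rmin_pos |]; intros e He Heh.
    pose proof (Rmin_l h1 h2); pose proof (Rmin_r h1 h2).
    specialize (F1 e He ltac:(lra)); specialize (F2 e He ltac:(lra)).
    pose proof (vnorm_le_Rabs_sum (vsub (f e) l)); simpl in *; lra.
Qed.

Lemma lim_eps0_eq f l l' : lim_eps0 f l -> l = l' -> lim_eps0 f l'.
Proof. now intros ? <-. Qed.

Lemma lim_eps0_ext f g l :
  (forall e, 0 < e -> g e = f e) -> lim_eps0 f l -> lim_eps0 g l.
Proof.
  intros Hfg H d Hd; destruct (H d Hd) as [h [Hh Hf]].
  exists h; split; auto; intros e He Heh; rewrite Hfg; auto.
Qed.

Lemma lim_eps0_add f g l l' :
  lim_eps0 f l -> lim_eps0 g l' -> lim_eps0 (fun e => vadd (f e) (g e)) (vadd l l').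
Proof. rewrite !lim_eps0_iff; intros [? ?] [? ?]; split; solve_lim_right0. Qed.

Lemma lim_eps0_sub f g l l' :
  lim_eps0 f l -> lim_eps0 g l' -> lim_eps0 (fun e => vsub (f e) (g e)) (vsub l l').
Proof. rewrite !lim_eps0_iff; intros [? ?] [? ?]; split; solve_lim_right0. Qed.

Lemma lim_eps0_scal c f l :
  lim_eps0 f l -> lim_eps0 (fun e => vscal c (f e)) (vscal c l).
Proof. rewrite !lim_eps0_iff; intros [? ?]; split; solve_lim_right0. Qed.

Ltac vec_ring := unfold vadd, vsub, vscal; simpl; f_equal; ring.

Ltac solve_lim_eps0 :=
  first
  [ eassumption
  | apply lim_eps0_add; solve_lim_eps0
  | apply lim_eps0_sub; solve_lim_eps0
  | apply lim_eps0_scal; solve_lim_eps0 ].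

Lemma lim_eps0_wedge_e3 f bb l bl :
  lim_eps0 f l -> lim_right0 bb bl ->
  lim_eps0 (fun e => wedge_e3 (f e) (bb e)) (wedge_e3 l bl).
Proof. rewrite !lim_eps0_iff; intros [? ?] ?; split; solve_lim_right0. Qed.

Lemma cont_vec_lim_eps0 E t X y :
  cont_vec E -> 0 <= t -> lim_eps0 X y -> lim_eps0 (fun e => E t (X e)) (E t y).
Proof.
  intros HE Ht HX d Hd; destruct (HE t y Ht d Hd) as [h [Hh HEc]].
  destruct (HX h Hh) as [h' [Hh' HXh]]; exists h'; split; auto.
  intros e He Heh; apply HEc; auto.
  rewrite Rminus_diag, Rabs_R0; auto.
Qed.

Lemma cont_scal_lim_right0 b t X y :
  cont_scal b -> 0 <= t -> lim_eps0 X y -> lim_right0 (fun e => b t (X e)) (b t y).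
Proof.
  intros Hb Ht HX; apply lim_right0_iff; intros d Hd.
  destruct (Hb t y Ht d Hd) as [h [Hh Hbc]].
  destruct (HX h Hh) as [h' [Hh' HXh]]; exists h'; split; auto.
  intros e He Heh; apply Hbc; auto.
  rewrite Rminus_diag, Rabs_R0; auto.
Qed.

Definition force (u : vec) (bb : R) (ee : vec) : vec := vadd (wedge_e3 u bb) ee.

Definition stage_eq (s c bb : R) (ee q u : vec) : Prop :=
  vscal s u = vadd q (vscal c (force u bb ee)).

(* Solution of s u = r + c (u /\ bb e3), by Cramer's rule. *)
Definition stage_solve (s c bb : R) (r : vec) : vec :=
  vscal (/ (s * s + c * c * (bb * bb)))
    (s * fst r + c * bb * snd r, s * snd r - c * bb * fst r).

Lemma stage_eq_solve s c bb ee q u :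
  0 < s -> stage_eq s c bb ee q u -> u = stage_solve s c bb (vadd q (vscal c ee)).
Proof.
  intros Hs H; destruct u as [u1 u2]; injection H as H1 H2; simpl in *.
  assert (0 < s * s + c * c * (bb * bb)) by (pose proof (Rle_0_sqr (c * bb)); unfold Rsqr in *; nra).
  unfold stage_solve, vscal; simpl; f_equal; field_simplify_eq; nra.
Qed.

Lemma lim_eps0_stage_solve s bb r s0 c b0 r0 :
  lim_right0 s s0 -> lim_right0 bb b0 -> lim_eps0 r r0 ->
  s0 * s0 + c * c * (b0 * b0) <> 0 ->
  lim_eps0 (fun e => stage_solve (s e) c (bb e) (r e)) (stage_solve s0 c b0 r0).
Proof. rewrite !lim_eps0_iff; intros ? ? [? ?] ?; split; solve_lim_right0. Qed.

Lemma stage_eq_limit c bs es bb ee q u :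
  c <> 0 -> bs <> 0 ->
  (forall e, 0 < e -> stage_eq (e * e) c (bb e) (ee e) (q e) (u e)) ->
  lim_right0 bb bs -> lim_eps0 ee es -> lim_eps0 q (0, 0) ->
  lim_eps0 u (vscal (/ normB2 bs) (wedge_e3 es bs)) /\
  lim_eps0 (fun e => force (u e) (bb e) (ee e)) (0, 0).
Proof.
  intros Hc Hbs Hstage Hbb Hee Hq.
  assert (Hu : lim_eps0 u (vscal (/ normB2 bs) (wedge_e3 es bs))).
  { apply lim_eps0_ext with
      (fun e => stage_solve (e * e) c (bb e) (vadd (q e) (vscal c (ee e)))).
    { intros e He; apply stage_eq_solve; [nra | auto]. }
    eapply lim_eps0_eq.
    - apply lim_eps0_stage_solve with (s0 := 0 * 0); [solve_lim_right0 | eassumption | |].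
      + solve_lim_eps0.
      + replace (0 * 0 * (0 * 0) + c * c * (bs * bs)) with ((c * bs) * (c * bs)) by ring.
        apply Rmult_integral_contrapositive_currified;
          apply Rmult_integral_contrapositive_currified; auto.
    - unfold stage_solve, normB2, wedge_e3, vscal, vadd; simpl; f_equal; field; auto. }
  split; auto.
  eapply lim_eps0_eq.
  - apply lim_eps0_add; [apply lim_eps0_wedge_e3; eassumption | eassumption].
  - unfold force, normB2, wedge_e3, vscal, vadd; simpl; f_equal; field; auto.
Qed.

(* The scheme in the variables u_i = v^(i) / eps and w = eps v. *)
Definition rescaled_step (E : R -> vec -> vec) (b : R -> vec -> R)
    (dt tn eps : R) (xn wn xn1 wn1 u1 u2 u3 u4 : vec) : Prop :=
  let c := alpha * dt in
  let xb2 := vadd xn (vscal dt u2) in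
  let xb3 := vadd xn (vscal (dt / 4) (vadd u2 u3)) in
  let F1 := force u1 (b tn xn) (E tn xn) in
  let F2 := force u2 (b tn xn) (E tn xn) in
  let F3 := force u3 (b (tn + dt) xb2) (E (tn + dt) xb2) in
  let F4 := force u4 (b (tn + dt / 2) xb3) (E (tn + dt / 2) xb3) in
  stage_eq (eps * eps) c (b tn xn) (E tn xn) wn u1 /\
  stage_eq (eps * eps) c (b tn xn) (E tn xn) (vsub wn (vscal c F1)) u2 /\
  stage_eq (eps * eps) c (b (tn + dt) xb2) (E (tn + dt) xb2)
    (vadd wn (vscal ((1 - alpha) * dt) F2)) u3 /\
  stage_eq (eps * eps) c (b (tn + dt / 2) xb3) (E (tn + dt / 2) xb3)
    (vadd wn (vscal dt (vadd (vadd (vscal beta F1) (vscal eta F2)) (vscal gamma F3)))) u4 /\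
  xn1 = vadd xn (vscal (dt / 6) (vadd (vadd u2 u3) (vscal 4 u4))) /\
  wn1 = vadd wn (vscal (dt / 6) (vadd (vadd F2 F3) (vscal 4 F4))).

Lemma scheme_step_rescaled E b dt eps tn xn vn xn1 vn1 :
  0 < eps -> scheme_step E b dt eps tn xn vn xn1 vn1 ->
  exists u1 u2 u3 u4, rescaled_step E b dt tn eps xn (vscal eps vn) xn1 (vscal eps vn1) u1 u2 u3 u4.
Proof.
  intros Heps H; unfold scheme_step in H; cbv zeta in H.
  destruct H as (x1 & v1 & x2 & v2 & x3 & v3 & x4 & v4 & _ & H1 & _ & H2 & _ & H3 & _ & H4 & Hx & Hv).
  exists (vscal (/ eps) v1), (vscal (/ eps) v2), (vscal (/ eps) v3), (vscal (/ eps) v4).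
  assert (Hxb2 : vadd xn (vscal dt (vscal (/ eps) v2)) = vadd xn (vscal (dt / eps) v2))
    by (unfold vadd, vscal; simpl; f_equal; field; lra).
  assert (Hxb3 : vadd xn (vscal (dt / 4) (vadd (vscal (/ eps) v2) (vscal (/ eps) v3)))
               = vadd xn (vscal (dt / (4 * eps)) (vadd v2 v3)))
    by (unfold vadd, vscal; simpl; f_equal; field; lra).
  unfold rescaled_step; cbv zeta; rewrite Hxb2, Hxb3.
  unfold stage_eq, force.
  repeat split;
    [rewrite H1 at 1 | rewrite H2 at 1 | rewrite H3 at 1 | rewrite H4 at 1 | rewrite Hx | rewrite Hv];
    unfold vadd, vsub, vscal, wedge_e3; simpl; f_equal; field; lra.
Qed.

Lemma rescaled_stage_functions E b dt tn (X V X1 V1 : R -> vec) :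
  (forall e, 0 < e -> scheme_step E b dt e tn (X e) (V e) (X1 e) (V1 e)) ->
  exists u1 u2 u3 u4 : R -> vec, forall e, 0 < e ->
    rescaled_step E b dt tn e (X e) (vscal e (V e)) (X1 e) (vscal e (V1 e))
      (u1 e) (u2 e) (u3 e) (u4 e).
Proof.
  intros Hscheme.
  destruct (functional_choice (fun e (U : vec * vec * vec * vec) => 0 < e ->
      let '(u1, u2, u3, u4) := U in
      rescaled_step E b dt tn e (X e) (vscal e (V e)) (X1 e) (vscal e (V1 e)) u1 u2 u3 u4))
    as [U HU].
  { intros e; destruct (Rlt_le_dec 0 e) as [He | He].
    - destruct (scheme_step_rescaled _ _ _ _ _ _ _ _ _ He (Hscheme e He))
        as (u1 & u2 & u3 & u4 & Hu).
      now exists (u1, u2, u3, u4).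
    - exists ((0, 0), (0, 0), (0, 0), (0, 0)); lra. }
  exists (fun e => fst (fst (fst (U e)))), (fun e => snd (fst (fst (U e)))),
    (fun e => snd (fst (U e))), (fun e => snd (U e)).
  intros e He; specialize (HU e He); now destruct (U e) as [[[? ?] ?] ?].
Qed.

Lemma alpha_pos : 0 < alpha.
Proof.
  unfold alpha; apply Rdiv_lt_0_compat; [apply IZR_lt; reflexivity | apply pow_lt; lra].
Qed.

Section OneStep.

Variables (E : R -> vec -> vec) (b : R -> vec -> R) (dt : R).
Hypotheses (HE : cont_vec E) (Hb : cont_scal b)
  (Hb0 : forall t x, 0 <= t -> b t x <> 0) (Hdt : 0 < dt).

Lemma drift_stage_limit t Xs y q u :
  0 <= t ->
  (forall e, 0 < e -> stage_eq (e * e) (alpha * dt) (b t (Xs e)) (E t (Xs e)) (q e) (u e)) ->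
  lim_eps0 Xs y -> lim_eps0 q (0, 0) ->
  lim_eps0 u (drift E b t y) /\
  lim_eps0 (fun e => force (u e) (b t (Xs e)) (E t (Xs e))) (0, 0).
Proof.
  intros Ht Hstage HXs Hq; pose proof alpha_pos.
  apply stage_eq_limit with (c := alpha * dt) (q := q); auto.
  - apply Rgt_not_eq, Rmult_lt_0_compat; lra.
  - now apply cont_scal_lim_right0.
  - now apply cont_vec_lim_eps0.
Qed.

Lemma rescaled_step_limit {tn X W X1 W1 u1 u2 u3 u4 y} :
  0 <= tn ->
  (forall e, 0 < e ->
     rescaled_step E b dt tn e (X e) (W e) (X1 e) (W1 e) (u1 e) (u2 e) (u3 e) (u4 e)) ->
  lim_eps0 X y -> lim_eps0 W (0, 0) ->
  lim_eps0 X1 (limit_step E b dt tn y) /\ lim_eps0 W1 (0, 0).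
Proof.
  intros Htn Hstep HX HW; unfold rescaled_step in Hstep; cbv zeta in Hstep.
  pose proof (fun e He => proj1 (Hstep e He)) as S1.
  pose proof (fun e He => proj1 (proj2 (Hstep e He))) as S2.
  pose proof (fun e He => proj1 (proj2 (proj2 (Hstep e He)))) as S3.
  pose proof (fun e He => proj1 (proj2 (proj2 (proj2 (Hstep e He))))) as S4.
  pose proof (fun e He => proj1 (proj2 (proj2 (proj2 (proj2 (Hstep e He)))))) as Sx.
  pose proof (fun e He => proj2 (proj2 (proj2 (proj2 (proj2 (Hstep e He)))))) as Sw.
  clear Hstep; unfold limit_step; cbv zeta.
  destruct (drift_stage_limit _ _ _ _ _ Htn S1 HX HW) as [Hu1 HF1].
  destruct (drift_stage_limit _ _ _ _ _ Htn S2 HX) as [Hu2 HF2].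
  { eapply lim_eps0_eq; [solve_lim_eps0 | vec_ring]. }
  destruct (drift_stage_limit (tn + dt) _ (vadd y (vscal dt (drift E b tn y))) _ _
              ltac:(lra) S3) as [Hu3 HF3]; [solve_lim_eps0 | |].
  { eapply lim_eps0_eq; [solve_lim_eps0 | vec_ring]. }
  destruct (drift_stage_limit (tn + dt / 2) _ (vadd y (vscal (dt / 4) (vadd (drift E b tn y)
              (drift E b (tn + dt) (vadd y (vscal dt (drift E b tn y))))))) _ _
              ltac:(lra) S4) as [Hu4 HF4]; [solve_lim_eps0 | |].
  { eapply lim_eps0_eq; [solve_lim_eps0 | vec_ring]. }
  split.
  - apply (lim_eps0_ext _ _ _ Sx); solve_lim_eps0.
  - apply (lim_eps0_ext _ _ _ Sw); eapply lim_eps0_eq; [solve_lim_eps0 | vec_ring].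
Qed.

End OneStep.

Theorem proposition3p4
  (E : R -> vec -> vec) (b : R -> vec -> R)
  (HE : cont_vec E) (Hb : cont_scal b)
  (Hb0 : forall t x, 0 <= t -> b t x <> 0)
  (dt T : R) (Hdt : 0 < dt) (HT : 0 < T)
  (x v : R -> nat -> vec) (y0 : vec)
  (Hscheme : forall eps, 0 < eps -> forall n : nat, (n < NT T dt)%nat ->
     scheme_step E b dt eps (INR n * dt) (x eps n) (v eps n)
       (x eps (S n)) (v eps (S n)))
  (Hbdd : forall n : nat, (1 <= n)%nat -> (n <= NT T dt)%nat ->
     bounded_eps (fun eps => x eps n) /\
     bounded_eps (fun eps => vscal eps (v eps n)))
  (Hx0 : lim_eps0 (fun eps => x eps O) y0)
  (Hv0 : lim_eps0 (fun eps => vscal eps (v eps O)) (0, 0)) :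
  forall n : nat, (n <= NT T dt)%nat ->
    lim_eps0 (fun eps => x eps n) (limit_seq E b dt y0 n).
Proof.
  assert (Hsteps : forall n, (n <= NT T dt)%nat ->
    lim_eps0 (fun e => x e n) (limit_seq E b dt y0 n) /\
    lim_eps0 (fun e => vscal e (v e n)) (0, 0)).
  { induction n as [| n IH]; intros Hn; [now split |].
    destruct (IH ltac:(lia)) as [Hx Hw].
    assert (Htn : 0 <= INR n * dt) by (apply Rmult_le_pos; [apply pos_INR | lra]).
    destruct (rescaled_stage_functions E b dt (INR n * dt)
                (fun e => x e n) (fun e => v e n) (fun e => x e (S n)) (fun e => v e (S n)))
      as (u1 & u2 & u3 & u4 & Hu).
    { intros e He; apply Hscheme; [exact He | lia]. }
    exact (rescaled_step_limit E b dt HE Hb Hb0 Hdt Htn Hu Hx Hw). }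
  intros n Hn; apply Hsteps, Hn.
Qed.
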